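(* Let $J'\subseteq J$ be nonempty, $t_o\in[0,T-\sum_{j\in J'}p_j]$, and let $\alpha$, $c_1<\dots<c_m$, $M$ and $B_\alpha$ be as in the context. Let $1\le q<m$ and let $t_\alpha\in[c_q,c_{q+1})$ with $t_\alpha\in[t_o,t_e-p_\alpha]$ and $t_\alpha\notin B_\alpha$. Let $j,k\in J'\setminus\{\alpha\}$ with $M(j)\le q<M(k)$. Then for every partial schedule of $J'$ starting at $t_o$ in which $\alpha$ starts at time $t_\alpha$, job $j$ is processed before $\alpha$ and job $k$ is processed after $\alpha$, no relation of the dominance rule between $\alpha$ and $j$, between $\alpha$ and $k$, or between $j$ and $k$ is violated (regardless of the start times of $j$ and $k$).
   Context: $J$ is a finite set of jobs; job $j$ has processing time $p_j>0$ and weight $w_j>0$; $T=\sum_{j\in J}p_j$. For $J'\subseteq J$ and $t_o\ge0$, a partial schedule of $J'$ starting at $t_o$ is an ordering of $J'$ processed consecutively without idle time from time $t_o$; job $j$ has (absolute) start time $t_j$. For $t\ge 0$, $\varphi_j(t)=\frac{w_j}{p_j(p_j+t)}$. For jobs $i,j$ with $w_ip_j\neq w_jp_i$, $t^*_{ij}=\frac{w_jp_i^2-w_ip_j^2}{w_ip_j-w_jp_i}$ (the unique real $t$ with $\varphi_i(t)=\varphi_j(t)$). Dominance rule: for an interval $I\subseteq[0,\infty)$, the relation ''$i$ dominates $j$ on $I$'' is violated by a (partial) schedule if $j$ is processed before $i$ and both $t_j\in I$ and $t_i-p_j\in I$. The rule contains, for each pair of distinct jobs $i,j$ with $(p_i,w_i)\ne(p_j,w_j)$: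 (1) if $\varphi_i(t)\ge\varphi_j(t)$ for all $t\ge 0$, ''$i$ dominates $j$ on $[0,\infty)$''; (2) otherwise, if $\varphi_j(t)\ge\varphi_i(t)$ for all $t\ge0$, ''$j$ dominates $i$ on $[0,\infty)$''; (3) otherwise, labelling the pair so that $\varphi_i(0)>\varphi_j(0)$, $t^*_{ij}>0$ is defined and the rule contains ''$i$ dominates $j$ on $[0,t^*_{ij})$'' and ''$j$ dominates $i$ on $[t^*_{ij},\infty)$''. Banned set: for $i\in J$, $B_i$ is the union over all $j\in J\setminus\{i\}$ with $\varphi_i(0)>\varphi_j(0)$, $w_ip_j\ne w_jp_i$ and $t^*_{ij}\in(0,T)$ of the intervals $[t^*_{ij},t^*_{ij}+p_j)$. Subproblem data: $t_e=t_o+\sum_{j\in J'}p_j$; $\alpha\in J'$ maximizes $\varphi_i(t_o)$ over $i\in J'$, ties broken in favour of maximum $\varphi_i(t_e)$; for $j\in J'\setminus\{\alpha\}$ with $t^*_{\alpha j}$ defined, $c_{\alpha j}=t^*_{\alpha j}+p_j$; $C=\{c_{\alpha j}: j\in J'\setminus\{\alpha\},\ t^*_{\alpha j}\text{ defined},\ c_{\alpha j}\in(t_o,t_e)\}\cup\{t_o,t_e\}$ with distinct elements $t_o=c_1<\dots<c_m=t_e$; $M(\alpha)=1$, and for $j\neq\alpha$, $M(j)=r$ if $t^*_{\alpha j}$ is defined, $t^*_{\alpha j}\in(t_o,t_e)$ and $c_{\alpha j}=c_r$ for some $r\le m$, and $M(j)=|J'|+1$ otherwise. *)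

From HB Require Import structures.
From mathcomp Require Import all_boot all_order all_algebra.
Set Implicit Arguments. Unset Strict Implicit. Unset Printing Implicit Defensive.
Import Order.TTheory GRing.Theory Num.Theory.
Local Open Scope ring_scope.

Section Sched.
Variables (R : realFieldType) (J : finType) (p w : J -> R).

Definition Ttot : R := \sum_(j : J) p j.

Definition phi (j : J) (t : R) : R := w j / (p j * (p j + t)).

(* t*_{ij} is "defined" iff w_i p_j <> w_j p_i *)
Definition tdef (i j : J) : bool := w i * p j != w j * p i.
Definition tstar (i j : J) : R :=
  (w j * (p i) ^+ 2 - w i * (p j) ^+ 2) / (w i * p j - w j * p i).

(* "a dominates b on I" belongs to the dominance rule *)
Definition rule_rel (a b : J) (I : R -> Prop) : Prop :=
  a <> b /\ (p a, w a) <> (p b, w b) /\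
  [\/ (* case (1)/(2): a dominates b everywhere on [0,oo) *)
      (forall t, 0 <= t -> phi b t <= phi a t) /\ I = (fun t => 0 <= t),
      (* case (3), a is the job with larger phi at 0 *)
      [/\ ~ (forall t, 0 <= t -> phi b t <= phi a t),
          ~ (forall t, 0 <= t -> phi a t <= phi b t),
          phi b 0 < phi a 0 &
          I = (fun t => 0 <= t < tstar a b)]
    | (* case (3), a is the job with smaller phi at 0 *)
      [/\ ~ (forall t, 0 <= t -> phi b t <= phi a t),
          ~ (forall t, 0 <= t -> phi a t <= phi b t),
          phi a 0 < phi b 0 &
          I = (fun t => tstar b a <= t)]].

(* a partial schedule of J' starting at t_o is a sequence s with
   perm_eq s (enum J'); the absolute start time of job j in s: *)
Definition start (s : seq J) (t_o : R) (j : J) : R :=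
  t_o + \sum_(i <- take (index j s) s) p i.

Definition violated (s : seq J) (t_o : R) (a b : J) (I : R -> Prop) : Prop :=
  (index b s < index a s)%N /\ I (start s t_o b) /\ I (start s t_o a - p b).

Definition no_violation (s : seq J) (t_o : R) (a b : J) : Prop :=
  forall I : R -> Prop,
    (rule_rel a b I -> ~ violated s t_o a b I) /\
    (rule_rel b a I -> ~ violated s t_o b a I).

Definition inB (i : J) (t : R) : Prop :=
  exists j : J, [/\ j != i, phi j 0 < phi i 0, tdef i j,
     0 < tstar i j < Ttot & tstar i j <= t < tstar i j + p j].

Definition t_end (J' : {set J}) (t_o : R) : R := t_o + \sum_(j in J') p j.

Definition is_alpha (J' : {set J}) (t_o : R) (a : J) : Prop :=
  [/\ a \in J',
      forall i, i \in J' -> phi i t_o <= phi a t_o &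
      forall i, i \in J' -> phi i t_o = phi a t_o ->
         phi i (t_end J' t_o) <= phi a (t_end J' t_o)].

Definition cA (a j : J) : R := tstar a j + p j.

Definition Cseq (J' : {set J}) (t_o : R) (a : J) : seq R :=
  sort <=%R (undup ([:: t_o; t_end J' t_o] ++
    [seq cA a j | j <- enum J' &
       [&& j != a, tdef a j & t_o < cA a j < t_end J' t_o]])).

(* c_r for 1 <= r <= m *)
Definition cc (J' : {set J}) (t_o : R) (a : J) (r : nat) : R :=
  nth 0 (Cseq J' t_o a) r.-1.

Definition mm (J' : {set J}) (t_o : R) (a : J) : nat := size (Cseq J' t_o a).

(* M(j); "c_{aj} = c_r for some r <= m" iff c_{aj} \in Cseq, with r the
   (1-based) position, unique since the c_r are distinct *)
Definition MM (J' : {set J}) (t_o : R) (a j : J) : nat :=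
  if j == a then 1%N
  else if [&& tdef a j, t_o < tstar a j < t_end J' t_o &
              cA a j \in Cseq J' t_o a]
       then (index (cA a j) (Cseq J' t_o a)).+1
       else #|J'|.+1.

End Sched.

From HB Require Import structures.
From mathcomp Require Import all_boot all_order all_algebra.
From mathcomp Require Import ring lra zify.
Import Order.TTheory GRing.Theory Num.Theory.
Set Implicit Arguments. Unset Strict Implicit.
Local Open Scope ring_scope.

(* Let [gap a b t] be the numerator of [phi a t - phi b t]; it is affine in t,
   with slope [w a * p b - w b * p a], and vanishes at [tstar a b].  In each of
   its three cases, a relation "a dominates b on I" forces I to be an interval
   on which a is weakly ahead of b, and strictly ahead just after any tie.
   Since M(j) <= q, the crossing point t*_aj + p_j is at most c_q <= t_alpha,
   and alpha is ahead of j at t_o, so j is weakly ahead of alpha from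
   t_alpha - p_j on.  Since M(k) > q and t_alpha is not banned, alpha stays
   weakly ahead of k on [t_o, t_alpha], strictly at t_alpha when its lead is
   shrinking: a crossing t*_ak <= t_alpha would either ban t_alpha or make
   t*_ak + p_k a breakpoint <= t_alpha; the tie-break in the choice of alpha
   excludes a crossing at t_o itself.  A violated relation would then contain
   t_alpha - p_j (between alpha and j, or between j and k, where
   phi_k <= phi_alpha <= phi_j) or t_alpha (between alpha and k), contradicting
   the property of the intervals above. *)

Section Gap.
Variables (R : realFieldType) (J : finType) (p w : J -> R).
Hypotheses (p_gt0 : forall j, 0 < p j) (w_gt0 : forall j, 0 < w j).

Definition gap (a b : J) (t : R) : R :=
  w a * p b * (p b + t) - w b * p a * (p a + t).

Definition slope (a b : J) : R := w a * p b - w b * p a.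

Lemma gap_affine a b t u : gap a b u = gap a b t + slope a b * (u - t).
Proof. rewrite /gap /slope; ring. Qed.

Lemma gapN a b t : gap b a t = - gap a b t.
Proof. rewrite /gap; ring. Qed.

Lemma slopeN a b : slope b a = - slope a b.
Proof. rewrite /slope; ring. Qed.

Lemma tdef_slope a b : tdef p w a b = (slope a b != 0).
Proof. by rewrite /tdef /slope subr_eq0. Qed.

Lemma tstarC a b : tstar p w a b = tstar p w b a.
Proof.
by rewrite /tstar -[X in _ = X / _]opprB -[X in _ = _ / X]opprB invrN mulrNN.
Qed.

Lemma gap_tstar a b t :
  slope a b != 0 -> gap a b t = slope a b * (t - tstar p w a b).
Proof. rewrite /gap /tstar /slope => hs; field. exact: hs. Qed.

Lemma phi_le_gap a b t : 0 <= t ->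
  (phi p w b t <= phi p w a t) = (0 <= gap a b t).
Proof.
move=> ht; have := p_gt0 a; have := p_gt0 b => hb ha.
have da : 0 < p a * (p a + t) by apply: mulr_gt0; lra.
have db : 0 < p b * (p b + t) by apply: mulr_gt0; lra.
by rewrite /phi ler_pdivrMr // mulrAC ler_pdivlMr // /gap subr_ge0 !mulrA.
Qed.

Lemma phi_lt_gap a b t : 0 <= t ->
  (phi p w b t < phi p w a t) = (0 < gap a b t).
Proof. by move=> ht; rewrite ltNge phi_le_gap // gapN oppr_ge0 -ltNge. Qed.

Lemma gap_slope_eq0 a b t :
  slope a b = 0 -> gap a b t = 0 -> (p a, w a) = (p b, w b).
Proof.
move=> hs hg; have := p_gt0 a; have := w_gt0 b => hwb hpa.
have hp : w b * p a * (p b - p a) = 0.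
  by rewrite -hg (gap_affine _ _ (- p b)) hs mul0r addr0 /gap; ring.
have epa : p a = p b.
  by move/eqP: hp; rewrite !mulf_eq0 subr_eq0 => /orP[/orP[]|] /eqP; lra.
have ewa : w a = w b.
  have : (w a - w b) * p a = 0 by rewrite -hs /slope epa; ring.
  by move/eqP; rewrite mulf_eq0 subr_eq0 => /orP[] /eqP; lra.
by rewrite epa ewa.
Qed.

Lemma dominates_everywhereP a b : 0 <= gap a b 0 ->
  (forall t, 0 <= t -> phi p w b t <= phi p w a t) <-> 0 <= slope a b.
Proof.
move=> hg0; split=> [hall | hs t ht].
  rewrite leNgt; apply/negP => hs.
  have ht : 0 <= gap a b 0 / - slope a b + 1.
    by rewrite addr_ge0 // divr_ge0 // oppr_ge0 ltW.
  have := hall _ ht; rewrite phi_le_gap // (gap_affine _ _ 0) subr0.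
  have -> : slope a b * (gap a b 0 / - slope a b + 1) = slope a b - gap a b 0.
    by field; rewrite lt_eqF.
  lra.
rewrite phi_le_gap // (gap_affine _ _ 0) subr0.
by have := mulr_ge0 hs ht; lra.
Qed.

Definition ahead (a b : J) (t : R) : Prop :=
  0 <= gap a b t /\ (gap a b t = 0 -> 0 < slope a b).

Lemma rule_rel_ahead a b I t : rule_rel p w a b I -> I t -> ahead a b t.
Proof.
case=> _ [hab [[hall ->] ht|[hn _ h0 ->] /andP[ht hlt]|[_ hn h0 ->] /= ht]].
- have hg0 : 0 <= gap a b 0 by rewrite -phi_le_gap // hall.
  have hs := (dominates_everywhereP hg0).1 hall.
  split=> [|hgt]; first by rewrite -phi_le_gap // hall.
  rewrite lt_def hs andbT; apply/eqP => hs0.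
  exact: hab (gap_slope_eq0 hs0 hgt).
- have hg0 : 0 < gap a b 0 by rewrite -phi_lt_gap.
  have hs : slope a b < 0.
    rewrite ltNge; apply/negP => hs; apply: hn.
    exact: (dominates_everywhereP (ltW hg0)).2.
  rewrite /ahead gap_tstar ?lt_eqF //.
  have : 0 < slope a b * (t - tstar p w a b) by rewrite nmulr_rgt0 // subr_lt0.
  by split=> [|h]; lra.
- have hg0 : 0 < gap b a 0 by rewrite -phi_lt_gap.
  have : slope b a < 0.
    rewrite ltNge; apply/negP => hs; apply: hn.
    exact: (dominates_everywhereP (ltW hg0)).2.
  rewrite slopeN oppr_lt0 => hs.
  rewrite /ahead gap_tstar ?gt_eqF // tstarC.
  by split=> [|_ //]; apply: mulr_ge0; [exact: ltW | rewrite subr_ge0].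
Qed.

Lemma rule_rel_convex a b I u v t :
  rule_rel p w a b I -> I u -> I v -> u <= t <= v -> I t.
Proof.
case=> _ [_ [[_ ->]|[_ _ _ ->]|[_ _ _ ->]]] /=.
- by move=> hu _ /andP[hut _]; lra.
- by move=> /andP[hu _] /andP[_ hv] /andP[hut htv]; apply/andP; split; lra.
- by move=> hu _ /andP[hut _]; lra.
Qed.

Lemma rule_rel_behind_slope a b I t :
  rule_rel p w a b I -> I t -> gap a b t <= 0 -> 0 < slope a b.
Proof.
move=> hr ht hle; have [hg hs] := rule_rel_ahead hr ht.
by apply: hs; apply/eqP; rewrite eq_le hle hg.
Qed.

Lemma rule_rel_excludes_behind a b I t :
  slope a b < 0 -> gap a b t <= 0 -> rule_rel p w a b I -> ~ I t.
Proof. by move=> hs hg hr ht; have := rule_rel_behind_slope hr ht hg; lra. Qed.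

Lemma rule_rel_excludes_ahead a b I t :
  0 <= gap a b t -> (slope a b < 0 -> 0 < gap a b t) ->
  rule_rel p w b a I -> ~ I t.
Proof.
move=> hg hpos hr ht.
have [] := rule_rel_ahead hr ht; rewrite gapN oppr_ge0 => hg' _.
have := rule_rel_behind_slope hr ht; rewrite gapN slopeN oppr_le0 oppr_gt0.
by move=> /(_ hg) /hpos; lra.
Qed.

Lemma rule_rel_excludes_straddle a b c I u v t :
  0 <= t - p b -> u <= t - p b <= v ->
  slope a b < 0 -> gap a b (t - p b) <= 0 ->
  0 <= gap a c (t - p b) -> 0 <= gap a c t ->
  rule_rel p w c b I -> I u -> I v -> False.
Proof.
move=> hx0 huv hs hgb hgcx hgct hr hu hv.
have hx := rule_rel_convex hr hu hv huv.
have hpb := p_gt0 b; have ht0 : 0 <= t by lra.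
have via_a x : 0 <= x -> 0 <= gap a c x -> gap a b x <= 0 ->
    phi p w c x <= phi p w b x.
  move=> x0 hc hb; apply: (@le_trans _ _ (phi p w a x)); rewrite phi_le_gap //.
  by rewrite gapN oppr_ge0.
have hcbx : gap c b (t - p b) <= 0.
  by rewrite gapN oppr_le0 -phi_le_gap // via_a.
have hscb := rule_rel_behind_slope hr hx hcbx.
have hcb0 : gap c b (t - p b) = 0.
  by have [] := rule_rel_ahead hr hx; lra.
have shift x : gap x b t = gap x b (t - p b) + slope x b * p b.
  by rewrite (gap_affine _ _ (t - p b)); congr (_ + _ * _); ring.
have hcbt : 0 < gap c b t by rewrite shift hcb0 add0r mulr_gt0.
have habt : gap a b t < 0.
  rewrite shift; have : slope a b * p b < 0 by rewrite nmulr_rlt0.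
  lra.
by have := via_a t ht0 hgct (ltW habt); rewrite phi_le_gap // gapN; lra.
Qed.
End Gap.

Section Schedule.
Variables (R : realFieldType) (J : finType) (p w : J -> R).
Hypothesis p_gt0 : forall j, 0 < p j.
Variables (s : seq J) (t_o : R).

Lemma t_end_gt (J' : {set J}) j : j \in J' -> t_o < t_end p J' t_o.
Proof.
move=> hj; rewrite /t_end ltrDl (bigD1 j) //=.
have : 0 <= \sum_(i in J' | i != j) p i by apply: sumr_ge0 => i _; exact: ltW.
by have := p_gt0 j; lra.
Qed.

Lemma start_ge a : t_o <= start p s t_o a.
Proof. by rewrite /start lerDl sumr_ge0 // => i _; exact: ltW. Qed.

Lemma start_before a b : a \in s -> (index a s < index b s)%N ->
  start p s t_o a + p a <= start p s t_o b.
Proof.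
move=> ha hab; rewrite /start -addrA lerD2l.
have -> : index b s = (index a s + (index b s - index a s))%N by lia.
rewrite takeD big_cat /= lerD2l.
have hlt : (index a s < size s)%N by rewrite index_mem.
rewrite (drop_nth a hlt) nth_index //.
have -> : (index b s - index a s = (index b s - index a s).-1.+1)%N by lia.
by rewrite /= big_cons lerDl sumr_ge0 // => i _; exact: ltW.
Qed.

Lemma no_violationC a b :
  no_violation p w s t_o a b -> no_violation p w s t_o b a.
Proof. by move=> h I; have [h1 h2] := h I. Qed.

Lemma no_violation_ordered a b : (index a s < index b s)%N ->
  (forall I, rule_rel p w b a I ->
     I (start p s t_o a) -> I (start p s t_o b - p a) -> False) ->
  no_violation p w s t_o a b.
Proof.
move=> hab hI I; split=> [_ [hba _] | hr [_ [ha hb]]]; last exact: hI hr ha hb.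
by move: hab hba; lia.
Qed.

End Schedule.

Section Breakpoints.
Variables (R : realFieldType) (J : finType) (p w : J -> R).
Variables (J' : {set J}) (t_o : R) (alpha : J).
Local Notation C := (Cseq p w J' t_o alpha).
Local Notation m := (mm p w J' t_o alpha).

Lemma mm_le_card : alpha \in J' -> (m <= #|J'|.+1)%N.
Proof.
move=> ha; rewrite /mm /Cseq size_sort.
apply: leq_trans (size_undup _) _.
rewrite /= size_map size_filter.
set P := (fun j => _).
have := count_predC P (enum J').
have : has (predC P) (enum J').
  by apply/hasP; exists alpha; rewrite ?mem_enum //= /P eqxx.
by rewrite has_count -cardE; lia.
Qed.

Lemma Cseq_nth_mono i k : (i <= k < m)%N -> nth 0 C i <= nth 0 C k.
Proof.
case/andP=> hik hk; apply: (sorted_leq_nth le_trans lexx) => //.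
- by apply: sort_sorted => x y; exact: le_total.
- by rewrite inE (leq_ltn_trans hik hk).
Qed.

Lemma cA_in_Cseq k : k \in J' -> k != alpha -> tdef p w alpha k ->
  t_o < cA p w alpha k < t_end p J' t_o -> cA p w alpha k \in C.
Proof.
move=> hk hka hd hc; rewrite mem_sort mem_undup mem_cat; apply/orP; right.
by apply/mapP; exists k; rewrite // mem_filter hka hd hc mem_enum hk.
Qed.

Lemma MM_le_cc j q : alpha \in J' -> j != alpha ->
  (MM p w J' t_o alpha j <= q)%N -> (q < m)%N ->
  [/\ tdef p w alpha j, t_o < tstar p w alpha j &
       cA p w alpha j <= cc p w J' t_o alpha q].
Proof.
move=> ha hja hM hq; move: hM; rewrite /MM (negbTE hja).
case: ifP => [/and3P[hd /andP[hto _] hC] hM | _ hM]; last first.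
  by have := mm_le_card ha; lia.
split=> //; rewrite /cc -(nth_index 0 hC); apply: Cseq_nth_mono.
apply/andP; split; first by rewrite -ltnS (ltn_predK hM).
exact: leq_ltn_trans (leq_pred q) hq.
Qed.

Lemma MM_gt_cc k q : k \in J' -> k != alpha -> tdef p w alpha k ->
  t_o < tstar p w alpha k < t_end p J' t_o ->
  t_o < cA p w alpha k < t_end p J' t_o ->
  (q < MM p w J' t_o alpha k)%N -> cc p w J' t_o alpha q.+1 <= cA p w alpha k.
Proof.
move=> hk hka hd hts hc; have hC := cA_in_Cseq hk hka hd hc.
rewrite /MM (negbTE hka) hd hts hC /= => hM.
rewrite /cc /= -(nth_index 0 hC); apply: Cseq_nth_mono.
by rewrite -ltnS hM /mm index_mem.
Qed.

End Breakpoints.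

Section AroundAlpha.
Variables (R : realFieldType) (J : finType) (p w : J -> R).
Hypothesis p_gt0 : forall j, 0 < p j.
Variables (J' : {set J}) (t_o : R) (alpha : J) (q : nat) (talpha : R).
Local Notation t_e := (t_end p J' t_o).
Local Notation phi := (phi p w).
Local Notation gap := (gap p w).
Local Notation slope := (slope p w).
Local Notation tstar := (tstar p w).

Lemma before_alpha_gap j : 0 <= t_o -> alpha \in J' -> j != alpha ->
  (MM p w J' t_o alpha j <= q)%N -> (q < mm p w J' t_o alpha)%N ->
  cc p w J' t_o alpha q <= talpha -> phi j t_o <= phi alpha t_o ->
  slope alpha j < 0 /\ gap alpha j (talpha - p j) <= 0.
Proof.
move=> hto0 ha hja hM hq hcq hle.
have [hd hto hc] := MM_le_cc ha hja hM hq.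
rewrite tdef_slope in hd.
rewrite phi_le_gap // gap_tstar // in hle.
have hneg : t_o - tstar alpha j < 0 by rewrite subr_lt0.
have hs : slope alpha j < 0 by rewrite lt_neqAle hd -(nmulr_lge0 _ hneg).
split=> //; rewrite gap_tstar // nmulr_rle0 // subr_ge0.
by move: hc; rewrite /cA; lra.
Qed.

Lemma tie_break_tstar k : 0 <= t_o -> t_o < t_e -> slope alpha k < 0 ->
  phi k t_o <= phi alpha t_o ->
  (phi k t_o = phi alpha t_o -> phi k t_e <= phi alpha t_e) ->
  t_o < tstar alpha k.
Proof.
move=> hto0 hte hs hle htie; have hd := ltr0_neq0 hs.
rewrite phi_le_gap // gap_tstar // nmulr_rge0 // subr_le0 in hle.
rewrite lt_neqAle hle andbT; apply/eqP => heq.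
have hg0 : gap alpha k t_o = 0 by rewrite gap_tstar // -heq subrr mulr0.
have htie0 : phi k t_o = phi alpha t_o.
  by apply/eqP; rewrite eq_le !phi_le_gap // [gap k _ _]gapN hg0 oppr0 lexx.
have te0 : 0 <= t_e by lra.
have := htie htie0; rewrite phi_le_gap //.
by rewrite gap_tstar // nmulr_rge0 // subr_le0 -heq; lra.
Qed.

Lemma after_alpha_tstar k : 0 <= t_o -> t_o < t_e -> t_e <= Ttot p ->
  t_o <= talpha <= t_e - p alpha -> ~ inB p w alpha talpha ->
  k \in J' -> k != alpha ->
  talpha < cc p w J' t_o alpha q.+1 -> (q < MM p w J' t_o alpha k)%N ->
  phi k t_o <= phi alpha t_o ->
  (phi k t_o = phi alpha t_o -> phi k t_e <= phi alpha t_e) ->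
  slope alpha k < 0 -> talpha < tstar alpha k.
Proof.
move=> hto0 hte hteT /andP[hta1 hta2] hB hk hka hcq hM hle htie hs.
have hd : tdef p w alpha k by rewrite tdef_slope ltr0_neq0.
have hto := tie_break_tstar hto0 hte hs hle htie.
have := p_gt0 k; have := p_gt0 alpha => hpa hpk.
rewrite ltNge; apply/negP => hts.
have [hc | hc] := ltP talpha (tstar alpha k + p k).
- apply: hB; exists k; split => //.
  + rewrite phi_lt_gap // gap_tstar ?ltr0_neq0 // sub0r nmulr_rgt0 //.
    by rewrite oppr_lt0; lra.
  + by apply/andP; split; lra.
  + by apply/andP; split.
have hts_e : t_o < tstar alpha k < t_e by apply/andP; split; lra.
have hc_e : t_o < cA p w alpha k < t_e by rewrite /cA; apply/andP; split; lra.
by have := MM_gt_cc hk hka hd hts_e hc_e hM; rewrite /cA; lra.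
Qed.

Lemma after_alpha_gap k : 0 <= t_o -> t_o < t_e -> t_e <= Ttot p ->
  t_o <= talpha <= t_e - p alpha -> ~ inB p w alpha talpha ->
  k \in J' -> k != alpha ->
  talpha < cc p w J' t_o alpha q.+1 -> (q < MM p w J' t_o alpha k)%N ->
  phi k t_o <= phi alpha t_o ->
  (phi k t_o = phi alpha t_o -> phi k t_e <= phi alpha t_e) ->
  (forall t, t_o <= t <= talpha -> 0 <= gap alpha k t) /\
  (slope alpha k < 0 -> 0 < gap alpha k talpha).
Proof.
move=> hto0 hte hteT hta hB hk hka hcq hM hle htie.
have hpos t : t <= talpha -> slope alpha k < 0 -> 0 < gap alpha k t.
  move=> ht hs.
  have := after_alpha_tstar hto0 hte hteT hta hB hk hka hcq hM hle htie hs.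
  by rewrite gap_tstar ?ltr0_neq0 // nmulr_rgt0 // subr_lt0; lra.
split=> [t /andP[ht1 ht2] | ]; last exact: hpos.
have [hs | hs] := ltP (slope alpha k) 0; first exact/ltW/hpos.
rewrite phi_le_gap // in hle; rewrite (gap_affine _ _ _ _ t_o).
have : 0 <= slope alpha k * (t - t_o) by rewrite mulr_ge0 // subr_ge0.
lra.
Qed.

End AroundAlpha.

Theorem lemma7 (R : realFieldType) (J : finType) (p w : J -> R)
  (hp : forall j, 0 < p j) (hw : forall j, 0 < w j)
  (J' : {set J}) (hJ' : J' != set0)
  (t_o : R) (hto : 0 <= t_o <= Ttot p - \sum_(j in J') p j)
  (alpha : J) (halpha : is_alpha p w J' t_o alpha)
  (q : nat) (hq : (1 <= q < mm p w J' t_o alpha)%N)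
  (talpha : R)
  (hc : cc p w J' t_o alpha q <= talpha < cc p w J' t_o alpha q.+1)
  (hint : t_o <= talpha <= t_end p J' t_o - p alpha)
  (hB : ~ inB p w alpha talpha)
  (j k : J) (hj : j \in J') (hk : k \in J')
  (hja : j != alpha) (hka : k != alpha)
  (hM : (MM p w J' t_o alpha j <= q < MM p w J' t_o alpha k)%N)
  (s : seq J) (hs : perm_eq s (enum J'))
  (hsa : start p s t_o alpha = talpha)
  (hjbefore : (index j s < index alpha s)%N)
  (hkafter : (index alpha s < index k s)%N) :
  no_violation p w s t_o alpha j /\ no_violation p w s t_o alpha k /\
  no_violation p w s t_o j k.
Proof.
case: halpha => haJ hmax htie.
case/andP: hto => hto0 hto_T; case/andP: hq => _ hqm.
case/andP: hc => hcq hcq1; case/andP: hM => hMj hMk.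
have hte : t_o < t_end p J' t_o := t_end_gt hp t_o hj.
have hteT : t_end p J' t_o <= Ttot p by rewrite /t_end; lra.
have haS : alpha \in s by rewrite -index_mem (leq_trans hkafter) ?index_size.
have hjS : j \in s by rewrite -index_mem (leq_trans hjbefore) ?index_size.
have hjta : start p s t_o j + p j <= talpha by rewrite -hsa start_before.
have hatk : talpha + p alpha <= start p s t_o k by rewrite -hsa start_before.
have hjk := ltn_trans hjbefore hkafter.
have htj := start_ge hp s t_o j.
have [hsj hgj] := before_alpha_gap hp hto0 haJ hja hMj hqm hcq (hmax j hj).
have [hgk hgk_pos] := after_alpha_gap hp hto0 hte hteT hint hB hk hka hcq1 hMk
  (hmax k hk) (htie k hk).
have := hp alpha; have := hp j => hpj hpa.
have hta : t_o <= talpha <= talpha by rewrite lexx andbT; case/andP: hint.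
have hx : t_o <= talpha - p j <= talpha by apply/andP; split; lra.
split; [apply: no_violationC | split];
  apply: no_violation_ordered => // I hr hu hv.
- by apply: (rule_rel_excludes_behind hp hw hsj hgj hr); rewrite -hsa.
- apply: (rule_rel_excludes_ahead hp hw (hgk _ hta) hgk_pos hr).
  by rewrite -hsa.
- apply: (rule_rel_excludes_straddle hp hw _ _ hsj hgj (hgk _ hx) (hgk _ hta))
    hr hu hv; first by lra.
  by apply/andP; split; lra.
Qed.
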